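(* Let $\alpha>0$, $\delta>0$, $S\ge0$, $D>0$. Let $N_1,N_2\ge1$ and let $p_{i,k}$ ($i,k\in\{1,\dots,N_1\}$), $q_{j,k}$ ($j,k\in\{1,\dots,N_2\}$), $r_{i,k}$ ($i\in\{1,\dots,N_1\},k\in\{1,\dots,N_2\}$) be continuous real functions of $t\ge0$ with $p_{i,k}=p_{k,i}\ge S$, $q_{j,k}=q_{k,j}\ge S$ and $0\le r_{i,k}\le D$. Let $(x^{(1)},x^{(2)}):[0,\infty)\to\mathbb{R}^{N_1}\times\mathbb{R}^{N_2}$ be a $C^1$ solution of $$\frac{d}{dt}x^{(1)}_i=\alpha\sum_{k=1}^{N_1}p_{k,i}\bigl(x^{(1)}_k-x^{(1)}_i\bigr)-\alpha\sum_{k=1}^{N_2}r_{i,k}\bigl(x^{(2)}_k-x^{(1)}_i\bigr)+\delta x^{(1)}_i\bigl(1-(x^{(1)}_i)^2\bigr),$$ $$\frac{d}{dt}x^{(2)}_j=\alpha\sum_{k=1}^{N_2}q_{k,j}\bigl(x^{(2)}_k-x^{(2)}_j\bigr)-\alpha\sum_{k=1}^{N_1}r_{k,j}\bigl(x^{(1)}_k-x^{(2)}_j\bigr)+\delta x^{(2)}_j\bigl(1-(x^{(2)}_j)^2\bigr).$$ Then $$\frac{d}{dt}M_2=-\frac{\alpha}{N_1}\sum_{i,k=1}^{N_1}p_{k,i}(x^{(1)}_k-x^{(1)}_i)^2-\frac{2\alpha}{N_1}\sum_{k=1}^{N_2}\sum_{i=1}^{N_1}r_{i,k}(x^{(2)}_k-x^{(1)}_i)x^{(1)}_i+\frac{2\delta}{N_1}\sum_{i=1}^{N_1}(x^{(1)}_i)^2\bigl(1-(x^{(1)}_i)^2\bigr)$$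 $$\qquad-\frac{\alpha}{N_2}\sum_{j,k=1}^{N_2}q_{k,j}(x^{(2)}_k-x^{(2)}_j)^2-\frac{2\alpha}{N_2}\sum_{k=1}^{N_1}\sum_{j=1}^{N_2}r_{k,j}(x^{(1)}_k-x^{(2)}_j)x^{(2)}_j+\frac{2\delta}{N_2}\sum_{j=1}^{N_2}(x^{(2)}_j)^2\bigl(1-(x^{(2)}_j)^2\bigr),$$ and there exists a constant $M_2^\infty<\infty$ (depending only on $\alpha,\delta,D,N_1,N_2$ and $M_2(0)$) such that $\sup_{0\le t<\infty}M_2(t)\le M_2^\infty$.
   Context: This is the two-group form of the attractive–repulsive Allen–Cahn system $\frac{d}{dt}x_i=\alpha\sum_{j}(a_{i,j}-\beta_{i,j})(x_j-x_i)+\delta x_i(1-x_i^2)$ on $N=N_1+N_2$ nodes split into groups $\mathcal{I}_1$ (features $x^{(1)}_i$) and $\mathcal{I}_2$ (features $x^{(2)}_j$): within a group the coefficient $a_{i,j}-\beta_{i,j}$ is $p$ or $q$ (attraction, at least $S$), and between groups $a_{i,j}-\beta_{i,j}=-r$ (repulsion, of size at most $D$). Notation: $M_2(V)=\frac1{N_1}\sum_{i=1}^{N_1}(x^{(1)}_i)^2$, $M_2(W)=\frac1{N_2}\sum_{j=1}^{N_2}(x^{(2)}_j)^2$, $M_2=M_2(V)+M_2(W)$. *)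

From Stdlib Require Import Reals Lra.
From Coquelicot Require Import Coquelicot.
Open Scope R_scope.

(* fsum N f = f 0 + f 1 + ... + f (N-1)  (indices are 0-based). *)
Fixpoint fsum (N : nat) (f : nat -> R) : R :=
  match N with
  | O => 0
  | S n => fsum n f + f n
  end.

(* Derivative of f at t (t >= 0) relative to the domain [0, +oo):
   (f (t+h) - f t) / h --> l as h --> 0, h <> 0, t + h >= 0.
   For t > 0 this is the ordinary derivative, at t = 0 the right derivative. *)
Definition has_deriv_nonneg (f : R -> R) (t l : R) : Prop :=
  filterlim (fun h => (f (t + h) - f t) / h)
    (within (fun h => h <> 0 /\ 0 <= t + h) (locally 0)) (locally l).

Definition cont_nonneg (f : R -> R) (t : R) : Prop :=
  filterlim f (within (fun s => 0 <= s) (locally t)) (locally (f t)).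

Definition rhs1 (alpha delta : R) (N1 N2 : nat)
  (p r : nat -> nat -> R -> R) (x1 x2 : nat -> R -> R) (i : nat) (t : R) : R :=
  alpha * fsum N1 (fun k => p k i t * (x1 k t - x1 i t))
  - alpha * fsum N2 (fun k => r i k t * (x2 k t - x1 i t))
  + delta * x1 i t * (1 - (x1 i t)^2).

Definition rhs2 (alpha delta : R) (N1 N2 : nat)
  (q r : nat -> nat -> R -> R) (x1 x2 : nat -> R -> R) (j : nat) (t : R) : R :=
  alpha * fsum N2 (fun k => q k j t * (x2 k t - x2 j t))
  - alpha * fsum N1 (fun k => r k j t * (x1 k t - x2 j t))
  + delta * x2 j t * (1 - (x2 j t)^2).

Definition AR_system (alpha delta S D : R) (N1 N2 : nat)
  (p q r : nat -> nat -> R -> R) (x1 x2 : nat -> R -> R) : Prop :=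
  0 < alpha /\ 0 < delta /\ 0 <= S /\ 0 < D /\
  (1 <= N1)%nat /\ (1 <= N2)%nat /\
  (forall i k t, (i < N1)%nat -> (k < N1)%nat -> 0 <= t -> cont_nonneg (p i k) t) /\
  (forall j k t, (j < N2)%nat -> (k < N2)%nat -> 0 <= t -> cont_nonneg (q j k) t) /\
  (forall i k t, (i < N1)%nat -> (k < N2)%nat -> 0 <= t -> cont_nonneg (r i k) t) /\
  (forall i k t, (i < N1)%nat -> (k < N1)%nat -> 0 <= t -> p i k t = p k i t /\ S <= p i k t) /\
  (forall j k t, (j < N2)%nat -> (k < N2)%nat -> 0 <= t -> q j k t = q k j t /\ S <= q j k t) /\
  (forall i k t, (i < N1)%nat -> (k < N2)%nat -> 0 <= t -> 0 <= r i k t <= D) /\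
  (* C^1 solution on [0, +oo): derivatives given by the equations (continuous RHS) *)
  (forall i t, (i < N1)%nat -> 0 <= t ->
     has_deriv_nonneg (x1 i) t (rhs1 alpha delta N1 N2 p r x1 x2 i t)) /\
  (forall j t, (j < N2)%nat -> 0 <= t ->
     has_deriv_nonneg (x2 j) t (rhs2 alpha delta N1 N2 q r x1 x2 j t)).

Definition M2 (N1 N2 : nat) (x1 x2 : nat -> R -> R) (t : R) : R :=
  / INR N1 * fsum N1 (fun i => (x1 i t)^2) + / INR N2 * fsum N2 (fun j => (x2 j t)^2).

Definition dM2 (alpha delta : R) (N1 N2 : nat)
  (p q r : nat -> nat -> R -> R) (x1 x2 : nat -> R -> R) (t : R) : R :=
  - alpha / INR N1 * fsum N1 (fun i => fsum N1 (fun k => p k i t * (x1 k t - x1 i t)^2))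
  - 2 * alpha / INR N1 * fsum N2 (fun k => fsum N1 (fun i => r i k t * (x2 k t - x1 i t) * x1 i t))
  + 2 * delta / INR N1 * fsum N1 (fun i => (x1 i t)^2 * (1 - (x1 i t)^2))
  - alpha / INR N2 * fsum N2 (fun j => fsum N2 (fun k => q k j t * (x2 k t - x2 j t)^2))
  - 2 * alpha / INR N2 * fsum N1 (fun k => fsum N2 (fun j => r k j t * (x1 k t - x2 j t) * x2 j t))
  + 2 * delta / INR N2 * fsum N2 (fun j => (x2 j t)^2 * (1 - (x2 j t)^2)).

From Stdlib Require Import Reals Lra Lia.
From Coquelicot Require Import Coquelicot.
Open Scope R_scope.

(* Differentiating M2 along the flow and symmetrizing the attraction sums (p and q are
   symmetric) gives the formula for dM2/dt. In it the attraction terms are nonpositive,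
   the repulsion terms are bounded by a multiple of M2 since -(b - a) a <= (3 a^2 + b^2) / 2,
   and the logistic terms absorb any linear term: c y + e y (1 - y) <= (c + e)^2 / (4 e).
   Hence dM2/dt <= K - M2 for a constant K, so exp t * (M2 t - K) is nonincreasing and
   M2 t <= max (M2 0) K. *)

Definition increments (t : R) : (R -> Prop) -> Prop :=
  within (fun h => h <> 0 /\ 0 <= t + h) (locally 0).

#[local] Instance increments_filter (t : R) : Filter (increments t).
Proof. apply within_filter, locally_filter. Qed.

Lemma increments_nonzero (t : R) (P : R -> Prop) :
  (forall h, h <> 0 -> P h) -> increments t P.
Proof. intros HP. exists (mkposreal 1 Rlt_0_1). intros h _ [Hh _]. auto. Qed.

Lemma increments_id (t : R) : filterlim (fun h => h) (increments t) (locally 0).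
Proof. intros P HP. apply filter_le_within. exact HP. Qed.

Lemma has_deriv_nonneg_ext (f g : R -> R) (t l : R) :
  (forall s, f s = g s) -> has_deriv_nonneg f t l -> has_deriv_nonneg g t l.
Proof.
  intros E H. eapply filterlim_ext; [|exact H]. intros h. simpl. now rewrite !E.
Qed.

Lemma has_deriv_nonneg_const (c t : R) : has_deriv_nonneg (fun _ => c) t 0.
Proof.
  eapply filterlim_ext; [|apply filterlim_const]. intros h. simpl. unfold Rdiv. ring.
Qed.

Lemma has_deriv_nonneg_plus (f g : R -> R) (t a b : R) :
  has_deriv_nonneg f t a -> has_deriv_nonneg g t b ->
  has_deriv_nonneg (fun s => f s + g s) t (a + b).
Proof.
  intros Hf Hg.
  eapply (filterlim_ext_loc (F := increments t)).
  2: exact (filterlim_comp_2 _ _ Rplus Hf Hg (filterlim_plus a b)).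
  apply increments_nonzero. intros h Hh. simpl. field. exact Hh.
Qed.

Lemma has_deriv_nonneg_cont (f : R -> R) (t l : R) :
  has_deriv_nonneg f t l ->
  filterlim (fun h => f (t + h)) (increments t) (locally (f t)).
Proof.
  intros Hf.
  assert (H : filterlim (fun h => f t + h * ((f (t + h) - f t) / h))
                (increments t) (locally (f t + 0 * l))).
  { eapply (filterlim_comp_2 _ _ Rplus (filterlim_const (f t))).
    - exact (filterlim_comp_2 _ _ Rmult (increments_id t) Hf (filterlim_mult 0 l)).
    - exact (filterlim_plus (f t) (0 * l)). }
  rewrite Rmult_0_l, Rplus_0_r in H.
  eapply filterlim_ext_loc; [|exact H].
  apply increments_nonzero. intros h Hh. field. exact Hh.
Qed.

Lemma has_deriv_nonneg_mult (f g : R -> R) (t a b : R) :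
  has_deriv_nonneg f t a -> has_deriv_nonneg g t b ->
  has_deriv_nonneg (fun s => f s * g s) t (a * g t + f t * b).
Proof.
  intros Hf Hg. pose proof (has_deriv_nonneg_cont g t b Hg) as Hgc.
  eapply (filterlim_ext_loc (F := increments t)).
  2:{ eapply (filterlim_comp_2 _ _ Rplus).
      - exact (filterlim_comp_2 _ _ Rmult Hf Hgc (filterlim_mult a (g t))).
      - exact (filterlim_comp_2 _ _ Rmult (filterlim_const (f t)) Hg
                 (filterlim_mult (f t) b)).
      - exact (filterlim_plus (a * g t) (f t * b)). }
  apply increments_nonzero. intros h Hh. simpl. field. exact Hh.
Qed.

Lemma has_deriv_nonneg_scal (c : R) (f : R -> R) (t a : R) :
  has_deriv_nonneg f t a -> has_deriv_nonneg (fun s => c * f s) t (c * a).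
Proof.
  intros H.
  replace (c * a) with (0 * f t + c * a) by ring.
  exact (has_deriv_nonneg_mult _ _ _ _ _ (has_deriv_nonneg_const c t) H).
Qed.

Lemma has_deriv_nonneg_sq (f : R -> R) (t a : R) :
  has_deriv_nonneg f t a -> has_deriv_nonneg (fun s => f s ^ 2) t (2 * f t * a).
Proof.
  intros H.
  replace (2 * f t * a) with (a * f t + f t * a) by ring.
  eapply has_deriv_nonneg_ext; [|exact (has_deriv_nonneg_mult _ _ _ _ _ H H)].
  intros s. simpl. ring.
Qed.

Lemma has_deriv_nonneg_fsum (N : nat) (f : nat -> R -> R) (l : nat -> R) (t : R) :
  (forall i, (i < N)%nat -> has_deriv_nonneg (f i) t (l i)) ->
  has_deriv_nonneg (fun s => fsum N (fun i => f i s)) t (fsum N l).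
Proof.
  induction N as [|N IH]; intros H; simpl.
  - apply has_deriv_nonneg_const.
  - apply has_deriv_nonneg_plus; [apply IH; intros i Hi|]; apply H; lia.
Qed.

Lemma is_derive_has_deriv_nonneg (f : R -> R) (t l : R) :
  is_derive f t l -> has_deriv_nonneg f t l.
Proof.
  intros H%is_derive_Reals P [eps HP].
  destruct (H eps (cond_pos eps)) as [d Hd].
  exists d. intros h Hh [Hh0 _]. apply HP, Hd; [exact Hh0|].
  change (Rabs (h - 0) < d) in Hh. now rewrite Rminus_0_r in Hh.
Qed.

Lemma has_deriv_nonneg_is_derive (f : R -> R) (t l : R) :
  0 < t -> has_deriv_nonneg f t l -> is_derive f t l.
Proof.
  intros Ht H. apply is_derive_Reals. intros eps Heps.
  destruct (H (ball l (mkposreal eps Heps)) (locally_ball _ _)) as [d Hd].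
  assert (Hm : 0 < Rmin d t) by (apply Rmin_pos; [apply cond_pos | exact Ht]).
  exists (mkposreal _ Hm). intros h Hh0 Hh. simpl in Hh.
  pose proof (Rmin_l d t). pose proof (Rmin_r d t).
  apply (Hd h).
  - change (Rabs (h - 0) < d). rewrite Rminus_0_r. lra.
  - split; [exact Hh0|]. apply Rabs_def2 in Hh. lra.
Qed.

Lemma has_deriv_nonneg_right_cont (f : R -> R) (t l : R) :
  0 <= t -> has_deriv_nonneg f t l -> filterlim f (at_right t) (locally (f t)).
Proof.
  intros Ht H P HP. destruct (has_deriv_nonneg_cont f t l H P HP) as [d Hd].
  exists d. intros s Hs Hts.
  replace s with (t + (s - t)) by ring. apply Hd.
  - change (Rabs (s - t - 0) < d). rewrite Rminus_0_r. exact Hs.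
  - split; [intros E|]; lra.
Qed.

Lemma nonincreasing_of_deriv_nonpos (h dh : R -> R) :
  (forall s, 0 <= s -> has_deriv_nonneg h s (dh s)) ->
  (forall s, 0 <= s -> dh s <= 0) ->
  forall u, 0 <= u -> h u <= h 0.
Proof.
  intros Hh Hdh.
  (* The mean value theorem applies only away from 0, where h is two-sided differentiable;
     the endpoint 0 is reached by right continuity. *)
  assert (Hpos : forall s u, 0 < s <= u -> h u <= h s).
  { intros s u Hsu.
    destruct (MVT_gen h s u dh) as (c & Hc & E).
    - intros x Hx. rewrite Rmin_left, Rmax_right in Hx by lra.
      apply has_deriv_nonneg_is_derive, Hh; lra.
    - intros x Hx. rewrite Rmin_left, Rmax_right in Hx by lra.
      apply continuity_pt_filterlim, (ex_derive_continuous (K := R_AbsRing) (V := R_NormedModule)).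
      exists (dh x). apply has_deriv_nonneg_is_derive, Hh; lra.
    - rewrite Rmin_left, Rmax_right in Hc by lra.
      pose proof (Hdh c ltac:(lra)).
      assert (0 <= - dh c * (u - s)) by (apply Rmult_le_pos; lra). lra. }
  intros u Hu. destruct (Req_dec u 0) as [->|Hu0]; [apply Rle_refl|].
  apply (closed_filterlim_loc (FF := Proper_StrongProper _ (at_right_proper_filter 0))
           h (fun z => h u <= z) (h 0)).
  - exact (has_deriv_nonneg_right_cont h 0 (dh 0) (Rle_refl 0) (Hh 0 (Rle_refl 0))).
  - exists (mkposreal u ltac:(lra)). intros s Hs Hs0.
    change (Rabs (s - 0) < u) in Hs. apply Hpos. apply Rabs_def2 in Hs. lra.
  - apply closed_ge.
Qed.

(* Gronwall: exp s * (f s - K) has nonpositive derivative. *)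
Lemma le_Rmax_of_deriv_le_sub (f l : R -> R) (K : R) :
  (forall t, 0 <= t -> has_deriv_nonneg f t (l t)) ->
  (forall t, 0 <= t -> l t <= K - f t) ->
  forall t, 0 <= t -> f t <= Rmax (f 0) K.
Proof.
  intros Hf Hl t Ht.
  assert (Hdecr := nonincreasing_of_deriv_nonpos (fun s => exp s * (f s - K))
                     (fun s => exp s * (f s - K) + exp s * (l s + 0))).
  destruct (Rle_lt_dec (f t) K) as [HK|HK]; [eapply Rle_trans; [exact HK|apply Rmax_r]|].
  eapply Rle_trans; [|apply Rmax_l].
  assert (Hexp : 1 <= exp t) by (pose proof (exp_ineq1_le t); lra).
  enough (Hdecay : exp t * (f t - K) <= exp 0 * (f 0 - K)).
  { rewrite exp_0 in Hdecay. assert (0 <= (exp t - 1) * (f t - K)) by (apply Rmult_le_pos; lra). lra. }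
  apply Hdecr; [intros s Hs | intros s Hs | exact Ht].
  - apply (has_deriv_nonneg_mult exp (fun s => f s - K)).
    + apply is_derive_has_deriv_nonneg, is_derive_exp.
    + apply (has_deriv_nonneg_plus f (fun _ => - K)); [apply Hf, Hs | apply has_deriv_nonneg_const].
  - pose proof (Hl s Hs). pose proof (exp_pos s).
    assert (0 <= exp s * (K - f s - l s)) by (apply Rmult_le_pos; lra). lra.
Qed.

Lemma fsum_ext (N : nat) (f g : nat -> R) :
  (forall i, (i < N)%nat -> f i = g i) -> fsum N f = fsum N g.
Proof.
  induction N as [|N IH]; intros H; simpl; [reflexivity|].
  rewrite IH, H; [reflexivity | lia | intros i Hi; apply H; lia].
Qed.

Lemma fsum_le (N : nat) (f g : nat -> R) :
  (forall i, (i < N)%nat -> f i <= g i) -> fsum N f <= fsum N g.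
Proof.
  induction N as [|N IH]; intros H; simpl; [lra|].
  apply Rplus_le_compat; [apply IH; intros i Hi|]; apply H; lia.
Qed.

Lemma fsum_const (N : nat) (c : R) : fsum N (fun _ => c) = INR N * c.
Proof. induction N as [|N IH]; simpl fsum; [simpl; ring|]. rewrite IH, S_INR. ring. Qed.

Lemma fsum_nonneg (N : nat) (f : nat -> R) :
  (forall i, (i < N)%nat -> 0 <= f i) -> 0 <= fsum N f.
Proof.
  intros H. replace 0 with (fsum N (fun _ => 0)) by (rewrite fsum_const; ring).
  now apply fsum_le.
Qed.

Lemma fsum_plus (N : nat) (f g : nat -> R) :
  fsum N (fun i => f i + g i) = fsum N f + fsum N g.
Proof. induction N as [|N IH]; simpl; [ring|]. rewrite IH. ring. Qed.

Lemma fsum_opp (N : nat) (f : nat -> R) : fsum N (fun i => - f i) = - fsum N f.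
Proof. induction N as [|N IH]; simpl; [ring|]. rewrite IH. ring. Qed.

Lemma fsum_scal_l (N : nat) (c : R) (f : nat -> R) :
  fsum N (fun i => c * f i) = c * fsum N f.
Proof. induction N as [|N IH]; simpl; [ring|]. rewrite IH. ring. Qed.

Lemma fsum_scal_r (N : nat) (f : nat -> R) (c : R) :
  fsum N (fun i => f i * c) = fsum N f * c.
Proof. induction N as [|N IH]; simpl; [ring|]. rewrite IH. ring. Qed.

Lemma fsum_swap (N M : nat) (f : nat -> nat -> R) :
  fsum N (fun i => fsum M (fun k => f i k)) = fsum M (fun k => fsum N (fun i => f i k)).
Proof.
  induction N as [|N IH]; simpl.
  - rewrite fsum_const. ring.
  - now rewrite IH, fsum_plus.
Qed.

(* Exchanging i and k in the first half of (a k - a i)^2 = (a k - a i) a k - (a k - a i) a i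
   turns it into the second half, by symmetry of w. *)
Lemma fsum_sym_sq_diff (N : nat) (w : nat -> nat -> R) (a : nat -> R) :
  (forall i k, (i < N)%nat -> (k < N)%nat -> w i k = w k i) ->
  fsum N (fun i => fsum N (fun k => w k i * (a k - a i) ^ 2)) =
  -2 * fsum N (fun i => fsum N (fun k => w k i * (a k - a i) * a i)).
Proof.
  intros Hw.
  assert (Hswap : fsum N (fun i => fsum N (fun k => w k i * (a k - a i) * a k)) =
                  - fsum N (fun i => fsum N (fun k => w k i * (a k - a i) * a i))).
  { rewrite fsum_swap, <- fsum_opp.
    apply fsum_ext. intros i Hi. rewrite <- fsum_opp.
    apply fsum_ext. intros k Hk. rewrite (Hw k i Hk Hi). ring. }
  transitivity (fsum N (fun i => fsum N (fun k => w k i * (a k - a i) * a k)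
                                 + - fsum N (fun k => w k i * (a k - a i) * a i))).
  - apply fsum_ext. intros i Hi. rewrite <- fsum_opp, <- fsum_plus.
    apply fsum_ext. intros k Hk. ring.
  - rewrite fsum_plus, fsum_opp, Hswap. ring.
Qed.

Definition mean_sq (N : nat) (a : nat -> R) : R := / INR N * fsum N (fun i => a i ^ 2).

Lemma mean_sq_has_deriv (N : nat) (x : nat -> R -> R) (l : nat -> R) (t : R) :
  (forall i, (i < N)%nat -> has_deriv_nonneg (x i) t (l i)) ->
  has_deriv_nonneg (fun s => mean_sq N (fun i => x i s)) t
    (/ INR N * fsum N (fun i => 2 * x i t * l i)).
Proof.
  intros H. apply has_deriv_nonneg_scal.
  apply (has_deriv_nonneg_fsum N (fun i s => x i s ^ 2)).
  intros i Hi. apply has_deriv_nonneg_sq, H, Hi.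
Qed.

(* One group of the system: own features [a] (N nodes) attracted with weights [w],
   features [b] of the other group (M nodes) repelling with weights [v]. Both [rhs1] and
   [rhs2] are instances, the latter with the groups exchanged and [v j k = r k j]. *)
Section OneGroup.

Variables (alpha delta D : R) (N M : nat) (w v : nat -> nat -> R) (a b : nat -> R).

Definition group_rhs (i : nat) : R :=
  alpha * fsum N (fun k => w k i * (a k - a i))
  - alpha * fsum M (fun k => v i k * (b k - a i))
  + delta * a i * (1 - a i ^ 2).

Definition group_dM2 : R :=
  - alpha / INR N * fsum N (fun i => fsum N (fun k => w k i * (a k - a i) ^ 2))
  - 2 * alpha / INR N * fsum M (fun k => fsum N (fun i => v i k * (b k - a i) * a i))
  + 2 * delta / INR N * fsum N (fun i => a i ^ 2 * (1 - a i ^ 2)).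

Lemma fsum_mul_group_rhs :
  (forall i k, (i < N)%nat -> (k < N)%nat -> w i k = w k i) ->
  / INR N * fsum N (fun i => 2 * a i * group_rhs i) = group_dM2.
Proof.
  intros Hw. unfold group_dM2. rewrite fsum_sym_sq_diff by exact Hw.
  rewrite (fsum_swap M N (fun k i => v i k * (b k - a i) * a i)).
  transitivity (/ INR N * fsum N (fun i =>
      2 * alpha * fsum N (fun k => w k i * (a k - a i) * a i)
      + -2 * alpha * fsum M (fun k => v i k * (b k - a i) * a i)
      + 2 * delta * (a i ^ 2 * (1 - a i ^ 2)))).
  - f_equal. apply fsum_ext. intros i _. unfold group_rhs.
    rewrite (fsum_scal_r N (fun k => w k i * (a k - a i))),
            (fsum_scal_r M (fun k => v i k * (b k - a i))).
    ring.
  - rewrite !fsum_plus, !fsum_scal_l. unfold Rdiv. ring.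
Qed.

Lemma cross_sum_le :
  (forall i k, (i < N)%nat -> (k < M)%nat -> 0 <= v i k <= D) ->
  - fsum M (fun k => fsum N (fun i => v i k * (b k - a i) * a i)) <=
  D / 2 * (3 * INR M * fsum N (fun i => a i ^ 2) + INR N * fsum M (fun k => b k ^ 2)).
Proof.
  intros Hv. rewrite <- fsum_opp.
  apply Rle_trans with
    (fsum M (fun k => fsum N (fun i => D / 2 * 3 * a i ^ 2 + D / 2 * b k ^ 2))).
  - apply fsum_le. intros k Hk. rewrite <- fsum_opp. apply fsum_le. intros i Hi.
    destruct (Hv i k Hi Hk) as [Hv0 HvD].
    assert (Hab : - ((b k - a i) * a i) <= (3 * a i ^ 2 + b k ^ 2) / 2)
      by (pose proof (pow2_ge_0 (a i + b k)); nra).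
    assert (Hpos : 0 <= (3 * a i ^ 2 + b k ^ 2) / 2)
      by (pose proof (pow2_ge_0 (a i)); pose proof (pow2_ge_0 (b k)); lra).
    apply Rmult_le_compat_l with (r := v i k) in Hab; [|exact Hv0].
    apply Rmult_le_compat_r with (r := (3 * a i ^ 2 + b k ^ 2) / 2) in HvD; [|exact Hpos].
    lra.
  - right.
    rewrite (fsum_ext M _ (fun k => D / 2 * 3 * fsum N (fun i => a i ^ 2)
                                    + INR N * (D / 2) * b k ^ 2)).
    + rewrite fsum_plus, fsum_const, (fsum_scal_l M (INR N * (D / 2))). ring.
    + intros k _. rewrite fsum_plus, fsum_const, fsum_scal_l. ring.
Qed.

Lemma group_dM2_le :
  0 < alpha -> (1 <= N)%nat -> (1 <= M)%nat ->
  (forall i k, (i < N)%nat -> (k < N)%nat -> 0 <= w i k) ->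
  (forall i k, (i < N)%nat -> (k < M)%nat -> 0 <= v i k <= D) ->
  group_dM2 <= alpha * D * INR M * (3 * mean_sq N a + mean_sq M b)
               + 2 * delta / INR N * fsum N (fun i => a i ^ 2 * (1 - a i ^ 2)).
Proof.
  intros Ha HN HM Hw Hv.
  assert (HNpos : 0 < INR N) by (apply lt_0_INR; lia).
  assert (HMpos : 0 < INR M) by (apply lt_0_INR; lia).
  assert (Hattr : 0 <= alpha / INR N *
                       fsum N (fun i => fsum N (fun k => w k i * (a k - a i) ^ 2))).
  { apply Rmult_le_pos; [left; apply Rdiv_lt_0_compat; lra|].
    apply fsum_nonneg. intros i Hi. apply fsum_nonneg. intros k Hk.
    apply Rmult_le_pos; [apply Hw; assumption | apply pow2_ge_0]. }
  assert (Hrep := cross_sum_le Hv).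
  apply Rmult_le_compat_l with (r := 2 * alpha / INR N) in Hrep;
    [|left; apply Rdiv_lt_0_compat; lra].
  unfold group_dM2, mean_sq in *.
  set (SA := fsum N (fun i => a i ^ 2)) in *.
  set (SB := fsum M (fun k => b k ^ 2)) in *.
  assert (E : 2 * alpha / INR N * (D / 2 * (3 * INR M * SA + INR N * SB)) =
              alpha * D * INR M * (3 * (/ INR N * SA) + / INR M * SB))
    by (field; lra).
  unfold Rdiv in *. lra.
Qed.

End OneGroup.

Definition logistic_max (c e : R) : R := (c + e) ^ 2 / (4 * e).

Lemma logistic_le (c e y : R) : 0 < e -> c * y + e * (y * (1 - y)) <= logistic_max c e.
Proof.
  intros He. unfold logistic_max.
  assert (E : (c + e) ^ 2 / (4 * e) - (c * y + e * (y * (1 - y)))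
              = (c + e - 2 * e * y) ^ 2 / (4 * e)) by (field; lra).
  assert (0 <= (c + e - 2 * e * y) ^ 2 / (4 * e))
    by (apply Rdiv_le_0_compat; [apply pow2_ge_0 | lra]).
  lra.
Qed.

Lemma mean_logistic_le (N : nat) (c e : R) (a : nat -> R) :
  0 < e -> (1 <= N)%nat ->
  c * mean_sq N a + e / INR N * fsum N (fun i => a i ^ 2 * (1 - a i ^ 2))
  <= logistic_max c e.
Proof.
  intros He HN. assert (HNpos : 0 < INR N) by (apply lt_0_INR; lia).
  assert (Hsum : fsum N (fun i => c * a i ^ 2 + e * (a i ^ 2 * (1 - a i ^ 2)))
                 <= INR N * logistic_max c e).
  { rewrite <- fsum_const. apply fsum_le. intros i _. apply logistic_le, He. }
  rewrite fsum_plus, !fsum_scal_l in Hsum.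
  unfold mean_sq.
  apply Rmult_le_compat_l with (r := / INR N) in Hsum; [|left; apply Rinv_0_lt_compat, HNpos].
  replace (/ INR N * (INR N * logistic_max c e)) with (logistic_max c e) in Hsum
    by (field; lra).
  unfold Rdiv. lra.
Qed.

Definition M2_level (alpha delta D : R) (N1 N2 : nat) : R :=
  logistic_max (alpha * D * (3 * INR N2 + INR N1) + 1) (2 * delta)
  + logistic_max (alpha * D * (3 * INR N1 + INR N2) + 1) (2 * delta).

Lemma dM2_split (alpha delta : R) (N1 N2 : nat) (p q r : nat -> nat -> R -> R)
    (x1 x2 : nat -> R -> R) (t : R) :
  dM2 alpha delta N1 N2 p q r x1 x2 t =
  group_dM2 alpha delta N1 N2 (fun k i => p k i t) (fun i k => r i k t)
    (fun i => x1 i t) (fun k => x2 k t)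
  + group_dM2 alpha delta N2 N1 (fun k j => q k j t) (fun j k => r k j t)
    (fun j => x2 j t) (fun k => x1 k t).
Proof. unfold dM2, group_dM2. lra. Qed.

Lemma M2_has_deriv (alpha delta S D : R) (N1 N2 : nat) (p q r : nat -> nat -> R -> R)
    (x1 x2 : nat -> R -> R) :
  AR_system alpha delta S D N1 N2 p q r x1 x2 ->
  forall t, 0 <= t -> has_deriv_nonneg (M2 N1 N2 x1 x2) t (dM2 alpha delta N1 N2 p q r x1 x2 t).
Proof.
  intros (_ & _ & _ & _ & _ & _ & _ & _ & _ & Hp & Hq & _ & Hx1 & Hx2) t Ht.
  rewrite dM2_split.
  apply (has_deriv_nonneg_plus (fun s => mean_sq N1 (fun i => x1 i s))
                               (fun s => mean_sq N2 (fun j => x2 j s))).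
  - rewrite <- fsum_mul_group_rhs by (intros i k Hi Hk; apply Hp; assumption).
    apply mean_sq_has_deriv. intros i Hi. apply Hx1; assumption.
  - rewrite <- fsum_mul_group_rhs by (intros i k Hi Hk; apply Hq; assumption).
    apply mean_sq_has_deriv. intros j Hj. apply Hx2; assumption.
Qed.

Lemma dM2_le (alpha delta S D : R) (N1 N2 : nat) (p q r : nat -> nat -> R -> R)
    (x1 x2 : nat -> R -> R) :
  AR_system alpha delta S D N1 N2 p q r x1 x2 ->
  forall t, 0 <= t ->
    dM2 alpha delta N1 N2 p q r x1 x2 t <= M2_level alpha delta D N1 N2 - M2 N1 N2 x1 x2 t.
Proof.
  intros (Ha & Hd & HS & _ & HN1 & HN2 & _ & _ & _ & Hp & Hq & Hr & _ & _) t Ht.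
  rewrite dM2_split. unfold M2_level.
  change (M2 N1 N2 x1 x2 t) with (mean_sq N1 (fun i => x1 i t) + mean_sq N2 (fun j => x2 j t)).
  assert (G1 := group_dM2_le alpha delta D N1 N2 (fun k i => p k i t) (fun i k => r i k t)
                  (fun i => x1 i t) (fun k => x2 k t) Ha HN1 HN2).
  assert (G2 := group_dM2_le alpha delta D N2 N1 (fun k j => q k j t) (fun j k => r k j t)
                  (fun j => x2 j t) (fun k => x1 k t) Ha HN2 HN1).
  specialize (G1 ltac:(intros i k Hi Hk; destruct (Hp i k t Hi Hk Ht); lra)
                 ltac:(intros i k Hi Hk; apply Hr; assumption)).
  specialize (G2 ltac:(intros j k Hj Hk; destruct (Hq j k t Hj Hk Ht); lra)
                 ltac:(intros j k Hj Hk; apply Hr; assumption)).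
  assert (L1 := mean_logistic_le N1 (alpha * D * (3 * INR N2 + INR N1) + 1) (2 * delta)
                  (fun i => x1 i t) ltac:(lra) HN1).
  assert (L2 := mean_logistic_le N2 (alpha * D * (3 * INR N1 + INR N2) + 1) (2 * delta)
                  (fun j => x2 j t) ltac:(lra) HN2).
  lra.
Qed.

Theorem lemma2p1 :
  (forall (alpha delta S D : R) (N1 N2 : nat)
          (p q r : nat -> nat -> R -> R) (x1 x2 : nat -> R -> R),
     AR_system alpha delta S D N1 N2 p q r x1 x2 ->
     forall t, 0 <= t ->
       has_deriv_nonneg (M2 N1 N2 x1 x2) t (dM2 alpha delta N1 N2 p q r x1 x2 t))
  /\
  (exists Minf : R -> R -> R -> nat -> nat -> R -> R,
     forall (alpha delta S D : R) (N1 N2 : nat)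
            (p q r : nat -> nat -> R -> R) (x1 x2 : nat -> R -> R),
       AR_system alpha delta S D N1 N2 p q r x1 x2 ->
       forall t, 0 <= t ->
         M2 N1 N2 x1 x2 t <= Minf alpha delta D N1 N2 (M2 N1 N2 x1 x2 0)).
Proof.
  split; [exact M2_has_deriv|].
  exists (fun alpha delta D N1 N2 M0 => Rmax M0 (M2_level alpha delta D N1 N2)).
  intros alpha delta S D N1 N2 p q r x1 x2 Hsys.
  apply (le_Rmax_of_deriv_le_sub _ (dM2 alpha delta N1 N2 p q r x1 x2)).
  - exact (M2_has_deriv _ _ _ _ _ _ _ _ _ _ _ Hsys).
  - exact (dM2_le _ _ _ _ _ _ _ _ _ _ _ Hsys).
Qed.
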